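(* Let $(X,d)$ be a metric space, and let $K\in\mathcal{K}(X)$ and $u\in\mathcal{F}(X)$ satisfy $\delta:=d_E(\chi_K,u)<\tfrac12$. Then $d_H(K,u_\alpha)\le\delta$ for every $\alpha\in\,]\delta,1-\delta]$.
   Context: Let $\mathbb{I}=[0,1]$. For a fuzzy set $u:X\to\mathbb{I}$ on a metric space $(X,d)$, its $\alpha$-level is $u_\alpha=\{x\in X: u(x)\ge\alpha\}$ for $\alpha\in\,]0,1]$, and $u_0=\overline{\{x\in X: u(x)>0\}}$. $\mathcal{F}(X)$ denotes the set of upper-semicontinuous fuzzy sets $u$ such that $u_0$ is compact and $u_1\neq\varnothing$. $\mathcal{K}(X)$ is the set of non-empty compact subsets of $X$, and for non-empty closed sets $C_1,C_2$ the Hausdorff distance is $d_H(C_1,C_2)=\max\{\sup_{x\in C_1}d(x,C_2),\sup_{y\in C_2}d(y,C_1)\}$. For $K\in\mathcal{K}(X)$, $\chi_K$ is the characteristic function of $K$ (an element of $\mathcal{F}(X)$). On $X\times\mathbb{I}$ use the metric $\overline{d}((x,\alpha),(y,\beta))=\max\{d(x,y),|\alpha-\beta|\}$. The endograph of $u$ is $\operatorname{end}(u)=\{(x,\alpha)\in X\times\mathbb{I}: u(x)\ge\alpha\}$, and the endograph metric is $d_E(u,v)=\overline{d}_H(\operatorname{end}(u),\operatorname{end}(v))$, the Hausdorff distance in $(X\times\mathbb{I},\overline{d})$. *)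

From HB Require Import structures.
From mathcomp Require Import all_boot all_order all_algebra.
From mathcomp Require Import all_classical all_reals all_analysis.
Set Implicit Arguments. Unset Strict Implicit. Unset Printing Implicit Defensive.
Import Order.TTheory GRing.Theory Num.Theory.
Local Open Scope classical_set_scope.
Local Open Scope ring_scope.

Section Defs.
Context {R : realType} {X : Type}.

Record is_metric (d : X -> X -> R) : Prop := {
  metric_ge0 : forall x y, 0 <= d x y;
  metric_eq0 : forall x y, d x y = 0 <-> x = y;
  metric_sym : forall x y, d x y = d y x;
  metric_tri : forall x y z, d x z <= d x y + d y z }.

Variable d : X -> X -> R.

Definition mopen (A : set X) : Prop :=
  forall x, A x -> exists e : R, 0 < e /\ forall y, d x y < e -> A y.

Definition mclosure (A : set X) : set X :=
  [set x | forall e : R, 0 < e -> exists y, A y /\ d x y < e].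

Definition mcompact (A : set X) : Prop :=
  forall (I : Type) (U : I -> set X), (forall i, mopen (U i)) ->
    A `<=` \bigcup_i U i ->
    exists F : set I, finite_set F /\ A `<=` \bigcup_(i in F) U i.

Definition in_K (K : set X) : Prop := K !=set0 /\ mcompact K.

Definition usc (u : X -> R) : Prop :=
  forall x (e : R), 0 < e -> exists r : R, 0 < r /\
    forall y, d x y < r -> u y < u x + e.

Definition level (u : X -> R) (alpha : R) : set X :=
  if 0 < alpha then [set x | alpha <= u x] else mclosure [set x | 0 < u x].

Definition in_F (u : X -> R) : Prop :=
  [/\ forall x, 0 <= u x <= 1, usc u, mcompact (level u 0) & level u 1 !=set0].

End Defs.

Definition chi {R : realType} {X : Type} (K : set X) : X -> R :=
  fun x => if `[< K x >] then 1 else 0.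

Definition dist_to {R : realType} {T : Type} (D : T -> T -> R) (x : T) (C : set T) : \bar R :=
  ereal_inf [set (D x y)%:E | y in C].

Definition hausdorff {R : realType} {T : Type} (D : T -> T -> R) (C1 C2 : set T) : \bar R :=
  maxe (ereal_sup [set dist_to D x C2 | x in C1])
       (ereal_sup [set dist_to D y C1 | y in C2]).

Definition dbar {R : realType} {X : Type} (d : X -> X -> R) (p q : X * R) : R :=
  Num.max (d p.1 q.1) `|p.2 - q.2|.

Definition endograph {R : realType} {X : Type} (u : X -> R) : set (X * R) :=
  [set p | 0 <= p.2 <= 1 /\ p.2 <= u p.1].

Definition d_E {R : realType} {X : Type} (d : X -> X -> R) (u v : X -> R) : \bar R :=
  hausdorff (dbar d) (endograph u) (endograph v).

(* Write δ = d_E(χ_K, u) and α ∈ ]δ, 1-δ].  For x ∈ K the point (x, 1) of end(χ_K) is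
   within δ of end(u); compactness of u_0 and upper semicontinuity of u turn these
   approximations into an exact y with d(x, y) ≤ δ and u(y) ≥ 1 - δ ≥ α, so K lies in the
   δ-neighbourhood of u_α.  Conversely, for y ∈ u_α the point (y, α) of end(u) is within
   δ + ε of some (z, b) ∈ end(χ_K); since b > α - δ - ε > 0, z lies in K. *)
From Pilot Require Import Defs.
From HB Require Import structures.
From mathcomp Require Import all_boot all_order all_algebra.
From mathcomp Require Import all_classical all_reals all_analysis.
From mathcomp Require Import lra.
Import Order.TTheory GRing.Theory Num.Theory.
Local Open Scope classical_set_scope.
Local Open Scope ring_scope.

Lemma finite_set_nat_ub {F : set nat} : finite_set F ->
  exists N : nat, forall i, F i -> (i <= N)%N.
Proof.
move=> fF; rewrite -(fset_setK fF).
exists (\max_(i <- finmap.enum_fset (fset_set F)) i)%N => i Fi.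
exact: (leq_bigmax_seq (F := id)).
Qed.

Section DistTo.
Context {R : realType} {T : Type} {D : T -> T -> R}.

Lemma dist_to_ge0 x C : (forall a b, 0 <= D a b) -> (0 <= dist_to D x C)%E.
Proof. by move=> D0; apply: le_ereal_inf_tmp => _ [y _ <-]; rewrite lee_fin. Qed.

Lemma dist_to_le {x C y} : C y -> (dist_to D x C <= (D x y)%:E)%E.
Proof. by move=> Cy; apply: ereal_inf_lbound; exists y. Qed.

Lemma dist_to_ltP {x C} {e : R} :
  (dist_to D x C < e%:E)%E -> exists2 y, C y & D x y < e.
Proof. by case/ereal_inf_lt => _ [y Cy <-]; rewrite lte_fin; exists y. Qed.

Lemma dist_to_le_approx {x C} {r e : R} :
  (dist_to D x C <= r%:E)%E -> 0 < e -> exists2 y, C y & D x y < r + e.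
Proof.
by move=> xCr e0; apply: dist_to_ltP; apply: le_lt_trans xCr _; rewrite lte_fin ltrDl.
Qed.

Lemma approx_le_dist_to {x C} {r : R} (e0 : R) : 0 < e0 ->
  (forall e, 0 < e -> e <= e0 -> exists2 y, C y & D x y < r + e) ->
  (dist_to D x C <= r%:E)%E.
Proof.
move=> e0_gt0 approx; apply/lee_addgt0Pr => e e_gt0.
have [||y Cy Dxy] := approx (Num.min e e0).
- by rewrite lt_min e_gt0 e0_gt0.
- by rewrite ge_min lexx orbT.
apply: le_trans (dist_to_le Cy) _; rewrite lee_fin.
by apply: (ltW (lt_le_trans Dxy _)); rewrite lerD2l ge_min lexx.
Qed.

Lemma dist_to_le_hausdorffl {C1 C2 x} :
  C1 x -> (dist_to D x C2 <= hausdorff D C1 C2)%E.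
Proof. by move=> C1x; rewrite le_max ereal_sup_ubound //; exists x. Qed.

Lemma dist_to_le_hausdorffr {C1 C2 y} :
  C2 y -> (dist_to D y C1 <= hausdorff D C1 C2)%E.
Proof. by move=> C2y; rewrite le_max orbC ereal_sup_ubound //; exists y. Qed.

Lemma hausdorff_ge0 C1 C2 : (forall a b, 0 <= D a b) -> C1 !=set0 ->
  (0 <= hausdorff D C1 C2)%E.
Proof.
move=> D0 [x C1x]; apply: le_trans (dist_to_le_hausdorffl C1x).
exact: dist_to_ge0.
Qed.

Lemma hausdorff_le C1 C2 (e : \bar R) :
  (forall x, C1 x -> (dist_to D x C2 <= e)%E) ->
  (forall y, C2 y -> (dist_to D y C1 <= e)%E) ->
  (hausdorff D C1 C2 <= e)%E.
Proof.
move=> h1 h2; rewrite ge_max.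
by apply/andP; split; apply: ge_ereal_sup => _ [x Cx <-]; [exact: h1 | exact: h2].
Qed.

End DistTo.

Lemma chi_gt0 (R : realType) (X : Type) (K : set X) x : 0 < (chi K x : R) -> K x.
Proof. by rewrite /chi; case: asboolP => // _; rewrite ltxx. Qed.

Lemma chi_in (R : realType) (X : Type) (K : set X) x : K x -> (chi K x : R) = 1.
Proof. by rewrite /chi; case: asboolP. Qed.

Lemma endograph_chi {R : realType} {X : Type} {K : set X} {x : X} :
  K x -> endograph (chi K : X -> R) (x, 1).
Proof. by move=> Kx; rewrite /endograph /= chi_in // ler01 lexx. Qed.

Lemma dbar_ge0 (R : realType) (X : Type) (d : X -> X -> R) :
  is_metric d -> forall p q, 0 <= dbar d p q.
Proof. by move=> d_metric p q; rewrite /dbar le_max (metric_ge0 d_metric). Qed.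

Section MetricSpace.
Context {R : realType} {X : Type} {d : X -> X -> R}.
Hypothesis d_metric : is_metric d.

Lemma mopen_setU (A B : set X) : mopen d A -> mopen d B -> mopen d (A `|` B).
Proof.
move=> oA oB x [/oA|/oB] [e [e0 he]]; exists e; split=> // y /he; by [left|right].
Qed.

Lemma mopen_dist_gt x (r : R) : mopen d [set w | r < d x w].
Proof.
move=> w /= rw; exists (d x w - r); split; first by rewrite subr_gt0.
move=> y; have := metric_tri d_metric x y w.
by rewrite (Defs.metric_sym d_metric y w); lra.
Qed.

Lemma usc_mopen_lt (u : X -> R) (c : R) : usc d u -> mopen d [set w | u w < c].
Proof.
move=> u_usc w /= uwc; have [rho [rho0 hrho]] := u_usc w (c - u w) ltac:(by rewrite subr_gt0).
by exists rho; split=> // y /hrho; lra.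
Qed.

Lemma level0_gt0 (u : X -> R) y : 0 < u y -> level d u 0 y.
Proof.
move=> uy; rewrite /level ltxx => e e0; exists y; split=> //.
by rewrite (proj2 (metric_eq0 d_metric y y)).
Qed.

Lemma mcompact_nested_cover {A : set X} {U : nat -> set X} : mcompact d A ->
  (forall n, mopen d (U n)) -> (forall m n, (m <= n)%N -> U m `<=` U n) ->
  A `<=` \bigcup_n U n -> exists N, A `<=` U N.
Proof.
move=> cA oU homU AU; have [F [fF AF]] := cA _ _ oU AU.
have [N leFN] := finite_set_nat_ub fF.
by exists N => x /AF [i Fi]; apply: homU; exact: leFN.
Qed.

Lemma mcompact_usc_attain {u : X -> R} {A : set X} {x} {r c : R} (e0 : R) :
  mcompact d A -> usc d u -> 0 < e0 ->
  (forall e, 0 < e -> e <= e0 -> exists2 y, A y & d x y < r + e /\ c - e < u y) ->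
  exists2 y, A y & d x y <= r /\ c <= u y.
Proof.
move=> cA u_usc e0_gt0 approx.
have [//|no_attain] := pselect (exists2 y, A y & d x y <= r /\ c <= u y).
pose U n := [set w | r + n.+1%:R^-1 < d x w] `|` [set w | u w < c - n.+1%:R^-1].
have oU n : mopen d (U n) by apply: mopen_setU; [exact: mopen_dist_gt | exact: usc_mopen_lt].
have homU m n : (m <= n)%N -> U m `<=` U n.
  move=> mn w; have nm : n.+1%:R^-1 <= m.+1%:R^-1 :> R by rewrite lef_pV2 ?posrE // ler_nat.
  rewrite /U /= => -[h|h]; [left|right].
  - by apply: le_lt_trans h; rewrite lerD2l.
  - by apply: lt_le_trans h _; rewrite lerD2l lerN2.
have AU : A `<=` \bigcup_n U n.
  move=> z Az; case: (leP (d x z) r) => [dxz|/ltr_add_invr[k hk]]; last by exists k => //; left.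
  have /ltr_add_invr[k hk] : u z < c.
    by rewrite ltNge; apply/negP => czu; apply: no_attain; exists z.
  by exists k => //; right; rewrite /= ltrBrDr.
have [N AUN] := mcompact_nested_cover cA oU homU AU.
set e := Num.min e0 N.+1%:R^-1.
have e_le : e <= N.+1%:R^-1 by rewrite ge_min lexx orbT.
have [||y Ay [dxy cuy]] := approx e.
- by rewrite lt_min e0_gt0 invr_gt0 ltr0Sn.
- by rewrite ge_min lexx.
have := AUN y Ay; rewrite /U /= => -[h|h].
- by have := lt_trans h dxy; rewrite ltNge lerD2l e_le.
- by have := lt_trans cuy h; rewrite ltNge lerD2l lerN2 e_le.
Qed.

End MetricSpace.

Section EndographClose.
Context {R : realType} {X : Type} {d : X -> X -> R} {K : set X} {u : X -> R} {r : R}.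
Hypothesis dE_le : (d_E d (chi K) u <= r%:E)%E.

Lemma dist_to_endograph_chi_le {p} :
  endograph u p -> (dist_to (dbar d) p (endograph (chi K)) <= r%:E)%E.
Proof. by move=> up; apply: le_trans dE_le; exact: dist_to_le_hausdorffr. Qed.

Lemma dist_to_endograph_le {p} :
  endograph (chi K) p -> (dist_to (dbar d) p (endograph u) <= r%:E)%E.
Proof. by move=> Kp; apply: le_trans dE_le; exact: dist_to_le_hausdorffl. Qed.

Lemma level_dist_to_K_le {alpha : R} {y} : 0 < alpha -> r < alpha -> alpha <= 1 ->
  level d u alpha y -> (dist_to d y K <= r%:E)%E.
Proof.
rewrite /level => a0 ra a1; rewrite a0 /= => ay.
have uya : endograph u (y, alpha) by split=> //=; rewrite ltW.
apply: (approx_le_dist_to ((alpha - r) / 2)) => [|e e0 e_le]; first lra.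
have [[z b] [/andP[b0 b1] bz]] := dist_to_le_approx (dist_to_endograph_chi_le uya) e0.
rewrite /dbar /= gt_max => /andP[dyz /ltr_normlP[ab ba]].
by exists z => //; apply: chi_gt0; apply: lt_le_trans bz => /=; lra.
Qed.

Hypothesis d_metric : is_metric d.
Hypothesis u_F : in_F d u.

Lemma K_near_level {x} : K x -> r < 1 -> exists2 y, level d u 0 y & d x y <= r /\ 1 - r <= u y.
Proof.
move=> Kx r1; have [_ u_usc u0_compact _] := u_F.
apply: (mcompact_usc_attain d_metric ((1 - r) / 2)) => // [|e e0 e_le]; first lra.
have [[y b] [/andP[b0 b1] bu]] :=
  dist_to_le_approx (dist_to_endograph_le (endograph_chi Kx)) e0.
move: bu; rewrite /dbar /= gt_max ger0_norm ?subr_ge0 // => bu /andP[dxy b_gt].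
exists y; last by split=> //; lra.
by apply: level0_gt0 => //; lra.
Qed.

Lemma K_dist_to_level_le {alpha : R} {x} : 0 < alpha -> alpha <= 1 - r -> K x ->
  (dist_to d x (level d u alpha) <= r%:E)%E.
Proof.
move=> a0 ar Kx; have [|y _ [dxy uy]] := K_near_level Kx; first lra.
have ly : level d u alpha y by rewrite /level a0 /=; lra.
by apply: le_trans (dist_to_le ly) _; rewrite lee_fin.
Qed.

End EndographClose.

Theorem lemma2p4 (R : realType) (X : Type) (d : X -> X -> R)
  (K : set X) (u : X -> R) :
  is_metric d -> in_K d K -> in_F d u ->
  (d_E d (chi K) u < (2^-1)%:E)%E ->
  forall alpha : R,
    (d_E d (chi K) u < alpha%:E)%E ->
    (alpha%:E <= 1%E - d_E d (chi K) u)%E ->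
    (hausdorff d K (level d u alpha) <= d_E d (chi K) u)%E.
Proof.
move=> d_metric [[x0 Kx0] _] u_F dE_half alpha dE_alpha alpha_dE.
have dE_ge0 : (0 <= d_E d (chi K) u)%E.
  by apply: hausdorff_ge0; [exact: dbar_ge0 | exists (x0, 1); exact: endograph_chi].
have [r dE_r] : exists r : R, d_E d (chi K) u = r%:E.
  exists (fine (d_E d (chi K) u)); rewrite fineK // ge0_fin_numE //.
  by rewrite (lt_trans dE_half) ?ltry.
have dE_le : (d_E d (chi K) u <= r%:E)%E by rewrite dE_r.
move: dE_ge0 dE_alpha alpha_dE; rewrite dE_r !lee_fin lte_fin => r_ge0 r_alpha alpha_r.
have alpha_gt0 : 0 < alpha by lra.
apply: hausdorff_le => [x | y].
- exact: (K_dist_to_level_le dE_le d_metric u_F alpha_gt0 alpha_r).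
- by apply: (level_dist_to_K_le dE_le alpha_gt0 r_alpha); lra.
Qed.
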